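(* Let $(a_i)_{i=1}^n$, $a_i=(m_i,x_i,v_i)$, be a system of $n$ particles (as defined in the context) with sticky trajectories $\gamma_1,\dots,\gamma_n$. Let $P_0=(0,0)$ and $P_k=\left(\sum_{i=1}^k m_i,\ \sum_{i=1}^k m_i v_i\right)$ for $1\le k\le n$, let $f:[0,\sum_{i=1}^n m_i]\to\mathbb{R}$ be the continuous piecewise linear function whose graph is the union of the segments $[P_{k-1},P_k]$, $1\le k\le n$, and let $r$ be the convex envelope of $f$ (the supremum of all convex functions $g\le f$). Let $0=k_0<k_1<\cdots<k_\ell=n$ be all the indices $k\in\{0,\dots,n\}$ for which $P_k$ lies on the graph of $r$, and for $1\le j\le \ell$ let the polygon $T_j$ be the set of particles $\{a_i : k_{j-1}<i\le k_j\}$, whose slope is the slope of the segment from $P_{k_{j-1}}$ to $P_{k_j}$ (equivalently of $r$ on the corresponding interval). Then the system has exactly $\ell$ clusters $A_1,\dots,A_\ell$ (ordered by initial positions), with $A_j=T_j$ for each $j$, and the (eventual) velocity of the cluster $A_j$ equals the slope of $T_j$.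
   Context: A particle is a triple $a=(m,x,v)\in\mathbb{R}_{>0}\times\mathbb{R}\times\mathbb{R}$ (mass, initial position, initial velocity). A system of $n$ particles is an $n$-tuple $(a_i)_{i=1}^n$ with $x_i<x_j$ iff $i<j$. To each particle is associated a unique continuous piecewise linear trajectory $\gamma_i:[0,\infty)\to\mathbb{R}$ such that: (1) $\gamma_i(0)=x_i$ and $\dot\gamma_i(0+)=v_i$; (2) (stickiness) if $\gamma_i(s)=\gamma_j(s)$ then $\gamma_i(t)=\gamma_j(t)$ for all $t\ge s$; (3) (conservation of momentum) if $\gamma_{i_1}(t)=\cdots=\gamma_{i_p}(t)\neq\gamma_i(t)$ for all other $i$, at some $t>0$, then $\dot\gamma_{i_q}(t+)=\frac{\sum_{k=1}^p m_{i_k}\dot\gamma_{i_k}(t-)}{\sum_{k=1}^p m_{i_k}}$ for each $q$. Here $\dot\gamma(t\pm)$ denotes one-sided derivatives. Two particles $a_i,a_j$ lie in the same cluster iff $\lim_{t\to\infty}|\gamma_i(t)-\gamma_j(t)|=0$; clusters are ordered so that $A_i$ precedes $A_j$ iff initial positions of particles in $A_i$ are smaller than those in $A_j$. The velocity of a cluster is the common velocity $\dot\gamma(t+)$ of its particles for all sufficiently large $t$. *)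

From HB Require Import structures.
From mathcomp Require Import all_boot all_order all_algebra.
From mathcomp Require Import all_classical all_reals all_analysis.
Set Implicit Arguments. Unset Strict Implicit. Unset Printing Implicit Defensive.
Import Order.TTheory GRing.Theory Num.Theory.
Import numFieldNormedType.Exports.
Local Open Scope classical_set_scope.
Local Open Scope ring_scope.

Definition right_deriv (R : realType) (g : R -> R) (t d : R) : Prop :=
  (fun s => (g s - g t) / (s - t)) @ t^'+ --> d.
Definition left_deriv (R : realType) (g : R -> R) (t d : R) : Prop :=
  (fun s => (g s - g t) / (s - t)) @ t^'- --> d.

Definition cont_pw_linear (R : realType) (g : R -> R) : Prop :=
  exists bs : seq R, forall a b : R, 0 <= a -> a < b ->
    (forall c, c \in bs -> ~ (a < c < b)) ->
    exists c0 c1 : R, forall t, a <= t <= b -> g t = c0 + c1 * t.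

Definition sticky_trajectories (R : realType) (n : nat)
  (m x v : 'I_n -> R) (gam : 'I_n -> R -> R) : Prop :=
  [/\ (forall i, cont_pw_linear (gam i)),
      (forall i, gam i 0 = x i /\ right_deriv (gam i) 0 (v i)),
      (forall i j s, 0 <= s -> gam i s = gam j s ->
         forall t, s <= t -> gam i t = gam j t) &
      (* conservation of momentum at the collision group of particle i *)
      (forall t, 0 < t -> forall i q, gam q t = gam i t ->
         forall (vl : 'I_n -> R) (vr : R),
           (forall k, gam k t = gam i t -> left_deriv (gam k) t (vl k)) ->
           right_deriv (gam q) t vr ->
           vr = (\sum_(k | gam k t == gam i t) m k * vl k) /
                (\sum_(k | gam k t == gam i t) m k))].

Definition same_cluster (R : realType) (n : nat) (gam : 'I_n -> R -> R)
  (i j : 'I_n) : Prop :=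
  `|gam i t - gam j t| @[t --> +oo] --> (0 : R).

Definition convex_on (R : realType) (a b : R) (g : R -> R) : Prop :=
  forall y z l, a <= y <= b -> a <= z <= b -> 0 <= l <= 1 ->
    g (l * y + (1 - l) * z) <= l * g y + (1 - l) * g z.

Definition conv_env (R : realType) (a b : R) (f : R -> R) (y : R) : R :=
  sup [set g y | g in [set g : R -> R | convex_on a b g /\
                                     (forall z, a <= z <= b -> g z <= f z)]].

(* M k = sum_{i<=k} m_i, Q k = sum_{i<=k} m_i v_i  (1-based k; here i : 'I_n 0-based) *)
Definition Msum (R : realType) (n : nat) (m : 'I_n -> R) (k : nat) : R :=
  \sum_(i < n | (i < k)%N) m i.
Definition Qsum (R : realType) (n : nat) (m v : 'I_n -> R) (k : nat) : R :=
  \sum_(i < n | (i < k)%N) m i * v i.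

From HB Require Import structures.
From mathcomp Require Import all_boot all_order all_algebra.
From mathcomp Require Import all_classical all_reals all_analysis.
From mathcomp Require Import ring lra.
Import Order.TTheory GRing.Theory Num.Theory.
Import numFieldNormedType.Exports.
Local Open Scope classical_set_scope.
Local Open Scope ring_scope.

(* Between consecutive breakpoints every particle moves at constant velocity, and
   particles never cross.  Let phi(c) = Q_c - sum_{i<c} m_i w_i, where P_c = (M_c, Q_c)
   and w_i is the final velocity of particle i: the momentum lost by the c leftmost
   particles.  In a collision the group shares its momentum, and inside the group the
   left particles were the faster ones, so the momentum of the c leftmost particles
   never increases, and it strictly decreases when a group straddling c forms.  Hence
   phi >= 0, with phi(c) = 0 exactly when c separates two final clusters.  For such
   a c, since the w_i increase, the line through P_c with the slope of the cluster
   left of c lies below every P_k, so P_c is on the convex envelope; for any other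
   c, P_c lies phi(c) > 0 above the chord between the enclosing cluster boundaries.
   So the contact points of the envelope are the cluster boundaries, and each of its
   slopes is the common final velocity of a cluster. *)

Section Marks.
Variables (Z : pred nat) (n : nat).

Definition marks := [seq k <- iota 0 n.+1 | Z k].
Definition mark j := nth 0%N marks j.
Definition nblocks := (size marks).-1.

Lemma sorted_marks : sorted ltn marks.
Proof. apply: sorted_filter; [exact: ltn_trans | exact: iota_ltn_sorted]. Qed.

Lemma mem_marks c : (c \in marks) = (c <= n)%N && Z c.
Proof. by rewrite /marks mem_filter mem_iota /= add0n ltnS andbC. Qed.

Hypotheses (Z0 : Z 0%N) (Zn : Z n).

Lemma size_marks : size marks = nblocks.+1.
Proof. by rewrite /nblocks /marks /= Z0. Qed.

Lemma mark0 : mark 0 = 0%N.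
Proof. by rewrite /mark /marks /= Z0. Qed.

Lemma mark_last : mark nblocks = n.
Proof.
rewrite /mark /nblocks /marks -addn1 iotaD filter_cat /= add0n Zn size_cat addn1.
by rewrite nth_cat ltnn subnn.
Qed.

Lemma mark_mono : {in [pred j | j <= nblocks]%N &, {mono mark : i j / i < j}}%N.
Proof.
move=> i j hi hj; apply: (lt_sorted_ltn_nth 0%N sorted_marks);
  by rewrite inE size_marks ltnS.
Qed.

Lemma mark_block j : (0 < j <= nblocks)%N ->
  [/\ (mark j.-1 < mark j)%N, (mark j <= n)%N, Z (mark j.-1), Z (mark j) &
      forall c, (mark j.-1 < c < mark j)%N -> ~~ Z c].
Proof.
move=> /andP[j0 jl].
have jl' : (j.-1 <= nblocks)%N by rewrite (leq_trans (leq_pred j)).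
have in_marks k : (k <= nblocks)%N -> (mark k <= n)%N && Z (mark k).
  by move=> hk; rewrite -mem_marks mem_nth // size_marks ltnS.
have /andP[_ Za] := in_marks _ jl'; have /andP[bn Zb] := in_marks _ jl.
split=> //; first by rewrite mark_mono ?inE // ltn_predL.
move=> c /andP[ac cb]; apply/negP => Zc.
have cK : c \in marks by rewrite mem_marks Zc (leq_trans (ltnW cb)).
have ic : (index c marks <= nblocks)%N by rewrite -ltnS -size_marks index_mem.
have mc : mark (index c marks) = c by rewrite /mark nth_index.
rewrite -mc !mark_mono ?inE // in ac cb.
by move: cb; rewrite -(prednK j0) ltnS leqNgt ac.
Qed.

Lemma mark_cover i : (i < n)%N ->
  exists2 j, (0 < j <= nblocks)%N & (mark j.-1 <= i < mark j)%N.
Proof.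
move=> hi.
have has_gt : has (fun k => i < k)%N marks.
  by apply/hasP; exists n => //; rewrite mem_marks leqnn Zn.
set j := find (fun k => i < k)%N marks.
have ij : (i < mark j)%N by exact: nth_find.
have j0 : (0 < j)%N by rewrite lt0n; apply: contraTneq ij => ->; rewrite mark0.
exists j; first by rewrite j0 -ltnS -size_marks -has_find.
rewrite ij andbT leqNgt.
have := @before_find _ 0%N (fun k => i < k)%N marks j.-1.
by rewrite -/j ltn_predL j0 => /(_ isT) ->.
Qed.

End Marks.

Section OneSidedDerivatives.
Context {R : realType}.

Lemma right_deriv_affine {g : R -> R} {t a d : R} : 0 < d ->
  (forall s, t < s < t + d -> g s = g t + a * (s - t)) -> right_deriv g t a.
Proof.
move=> d0 H; apply: (cvg_trans _ (cvg_cst a)).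
apply: near_eq_cvg.
have s_gt := nbhs_right_gt t.
have s_lt : \forall s \near t^'+, s < t + d by apply: nbhs_right_lt; lra.
near=> s.
have ts : t < s by near: s.
have std : s < t + d by near: s.
have st : s - t != 0 by rewrite subr_eq0 gt_eqF.
by rewrite (H s) ?ts ?std //; field.
Unshelve. all: try by end_near.
exact: at_right_proper_filter.
Qed.

Lemma left_deriv_affine {g : R -> R} {t a d : R} : 0 < d ->
  (forall s, t - d < s < t -> g s = g t + a * (s - t)) -> left_deriv g t a.
Proof.
move=> d0 H; apply: (cvg_trans _ (cvg_cst a)).
apply: near_eq_cvg.
have s_lt := nbhs_left_lt t.
have s_gt : \forall s \near t^'-, t - d < s by apply: nbhs_left_gt; lra.
near=> s.
have st : s < t by near: s.
have tds : t - d < s by near: s.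
have s_t : s - t != 0 by rewrite subr_eq0 lt_eqF.
by rewrite (H s) ?st ?tds //; field.
Unshelve. all: try by end_near.
exact: at_left_proper_filter.
Qed.

End OneSidedDerivatives.

Lemma nat_steps_eq {T : Type} (g : nat -> T) {i j} : (i <= j)%N ->
  (forall c, (i < c <= j)%N -> g c.-1 = g c) -> g i = g j.
Proof.
elim: j => [|j IH] ij step; first by move: ij; rewrite leqn0 => /eqP ->.
case: (ltngtP i j.+1) ij => // [ij _|-> //].
rewrite (IH ij) => [|c /andP[ic cj]]; last by apply: step; rewrite ic leqW.
by apply: (step j.+1); rewrite ij leqnn.
Qed.

Lemma same_cluster_sym (R : realType) (n : nat) (gam : 'I_n -> R -> R) i j :
  same_cluster gam i j -> same_cluster gam j i.
Proof. by rewrite /same_cluster; under eq_fun do rewrite distrC. Qed.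

Section RealFacts.
Context {R : realType}.

Lemma affine_root (a b T : R) : 0 <= a -> 0 <= T -> a + b * T < 0 ->
  exists2 e, 0 <= e < T & a + b * e = 0.
Proof.
move=> a0 T0 neg.
have b0 : b < 0 by rewrite ltNge; apply/negP => b0; have := mulr_ge0 b0 T0; lra.
exists (a / - b); last by field; rewrite ?oppr_eq0 lt_eqF.
apply/andP; split; first by apply: divr_ge0; lra.
by rewrite ltr_pdivrMr ?oppr_gt0 //; nra.
Qed.

Lemma sumr_lt0_at {I : finType} {F : I -> R} (a : I) :
  (forall i, F i <= 0) -> F a < 0 -> \sum_i F i < 0.
Proof.
move=> F0 Fa; rewrite (bigD1 a) //=.
have : \sum_(i | i != a) F i <= 0 by apply: sumr_le0.
lra.
Qed.

Lemma sumr_symmetrize (I : finType) (W : I -> I -> R) (b s : I -> R) :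
  (forall l k, W l k = W k l) ->
  2 * \sum_l \sum_k W l k * b l * (s k - s l) =
  \sum_l \sum_k W l k * (b l - b k) * (s k - s l).
Proof.
move=> Wsym; set S := \sum_l _.
have S' : S = \sum_l \sum_k W l k * b k * (s l - s k).
  by rewrite /S exchange_big; apply: eq_bigr => l _; apply: eq_bigr => k _; rewrite Wsym.
rewrite mulr2n mulrDl mul1r {2}S' /S -big_split; apply: eq_bigr => l _.
by rewrite -big_split; apply: eq_bigr => k _ /=; ring.
Qed.

End RealFacts.

Definition convex_minorant {R : realType} (a b : R) (f g : R -> R) : Prop :=
  convex_on a b g /\ (forall z, a <= z <= b -> g z <= f z).

Section ConvexEnvelope.
Context {R : realType} {a b : R} {f : R -> R}.

Lemma convex_on_affine (c s y0 : R) : convex_on a b (fun y => c + s * (y - y0)).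
Proof. by move=> y z l _ _ _; rewrite le_eqVlt; apply/orP; left; apply/eqP; ring. Qed.

Lemma conv_env_touch {g y} : a <= y <= b -> convex_minorant a b f g -> g y = f y ->
  conv_env a b f y = f y.
Proof.
move=> yab gm gy; apply/le_anti/andP; split.
  by apply: ge_sup; [exists (g y), g | move=> _ [h [_ hf] <-]; apply: hf].
have ub : has_ubound [set h y | h in convex_minorant a b f].
  by exists (f y) => _ [h [_ hf] <-]; apply: hf.
by apply: (ub_le_sup ub); exists g.
Qed.

Lemma conv_env_le_chord {g y z l} : convex_minorant a b f g ->
  a <= y <= b -> a <= z <= b -> 0 <= l <= 1 ->
  conv_env a b f (l * y + (1 - l) * z) <= l * f y + (1 - l) * f z.
Proof.
move=> gm ya za /andP[l0 l1]; apply: ge_sup; first by exists (g (l * y + (1 - l) * z)), g.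
move=> _ [h [hc hf] <-]; apply: (le_trans (hc _ _ _ ya za _)); first by rewrite l0.
by apply: lerD; apply: ler_wpM2l; rewrite ?hf //; lra.
Qed.

End ConvexEnvelope.

Section Polygon.
Context {R : realType} {n : nat} {m v : 'I_n.+1 -> R}.

Definition left_ind c (i : 'I_n.+1) : R := (i < c)%:R.

Lemma Msum_ind (w : 'I_n.+1 -> R) c : Msum w c = \sum_i left_ind c i * w i.
Proof.
rewrite /Msum big_mkcond; apply: eq_bigr => i _ /=.
by rewrite /left_ind; case: ifP; rewrite ?mul1r ?mul0r.
Qed.

Lemma Qsum_ind c : Qsum m v c = \sum_i left_ind c i * (m i * v i).
Proof. exact: (Msum_ind (fun i => m i * v i)). Qed.

Lemma Msum0 (w : 'I_n.+1 -> R) : Msum w 0 = 0.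
Proof. by rewrite /Msum big_pred0. Qed.

Lemma MsumS (w : 'I_n.+1 -> R) (k : 'I_n.+1) : Msum w k.+1 = Msum w k + w k.
Proof.
rewrite /Msum (bigD1 k) //= addrC; congr (_ + _); apply: eq_bigl => i.
rewrite ltnS leq_eqVlt val_eqE andb_orl andbN /=.
by apply: andb_idr => ik; rewrite -val_eqE neq_ltn ik.
Qed.

Lemma QsumS (k : 'I_n.+1) : Qsum m v k.+1 = Qsum m v k + m k * v k.
Proof. exact: (MsumS (fun i => m i * v i)). Qed.

Lemma Msum_const (w : 'I_n.+1 -> R) u {a c} : (a <= c)%N ->
  (forall i : 'I_n.+1, (a <= i < c)%N -> w i = u) ->
  Msum (fun i => m i * w i) c - Msum (fun i => m i * w i) a = u * (Msum m c - Msum m a).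
Proof.
move=> ac wu; rewrite !Msum_ind -!sumrB mulr_sumr; apply: eq_bigr => i _.
rewrite /left_ind; case: (ltnP i c) => ic; case: (ltnP i a) => ia /=;
  rewrite ?subrr ?mulr0 //; last by have := leq_trans ac ic; rewrite leqNgt ia.
by rewrite wu ?ia //; ring.
Qed.

Hypothesis m_gt0 : forall i, 0 < m i.

Lemma Msum_le {a b} : (a <= b)%N -> Msum m a <= Msum m b.
Proof.
move=> ab; rewrite !Msum_ind -subr_ge0 -sumrB; apply: sumr_ge0 => i _.
rewrite -mulrBl; apply: mulr_ge0; last exact/ltW.
by rewrite subr_ge0 ler_nat; case: (ltnP i a) => // ia; rewrite (leq_trans ia ab).
Qed.

Lemma Msum_ge0 a : 0 <= Msum m a.
Proof. by rewrite -(Msum0 m) Msum_le. Qed.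

Lemma Msum_range {c} : (c <= n.+1)%N -> 0 <= Msum m c <= Msum m n.+1.
Proof. by move=> cn; rewrite Msum_ge0 // Msum_le. Qed.

Lemma Msum_lt {a b} : (a < b)%N -> (a < n.+1)%N -> Msum m a < Msum m b.
Proof.
move=> ab an; have := Msum_le ab; rewrite (MsumS m (Ordinal an)) /=.
by have := m_gt0 (Ordinal an); lra.
Qed.

Context {f : R -> R}.
Hypothesis f_poly : forall (k : 'I_n.+1) (y : R), Msum m k <= y <= Msum m k.+1 ->
  f y = Qsum m v k + v k * (y - Msum m k).

Lemma polygon_vertex {c} : (c <= n.+1)%N -> f (Msum m c) = Qsum m v c.
Proof.
rewrite leq_eqVlt => /orP[/eqP ->|cn].
  have := f_poly ord_max (Msum m n.+1).
  rewrite /= (MsumS m ord_max) (QsumS ord_max) => ->; first ring.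
  by have := m_gt0 ord_max; lra.
by rewrite (f_poly (Ordinal cn)) /= ?lexx ?Msum_le //; ring.
Qed.

Lemma polygon_locate {y} : 0 <= y <= Msum m n.+1 ->
  exists k : 'I_n.+1, Msum m k <= y <= Msum m k.+1.
Proof.
move=> /andP[y0 yM].
suff S : forall c, (c < n.+1)%N -> y <= Msum m c.+1 ->
    exists k : 'I_n.+1, Msum m k <= y <= Msum m k.+1 by exact: S n (ltnSn n) yM.
elim=> [|c IH] cn yc; first by exists ord0; rewrite /= Msum0 y0.
case: (lerP y (Msum m c.+1)) => yc'; first exact: IH (ltnW cn) yc'.
by exists (Ordinal cn); rewrite yc (ltW yc').
Qed.

Lemma polygon_above_line {c0 s y0 : R} :
  (forall k, (k <= n.+1)%N -> c0 + s * (Msum m k - y0) <= Qsum m v k) ->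
  forall y, 0 <= y <= Msum m n.+1 -> c0 + s * (y - y0) <= f y.
Proof.
move=> below y yM; have [k /andP[ky yk]] := polygon_locate yM.
rewrite (f_poly k) ?ky //.
have A := below k (ltnW (ltn_ord k)); have B := below k.+1 (ltn_ord k).
rewrite MsumS QsumS in B yk.
have mk := m_gt0 k.
case: (lerP s (v k)) => sv.
  have : (s - v k) * (y - Msum m k) <= 0 by apply: mulr_le0_ge0; lra.
  nra.
have : (s - v k) * (y - Msum m k) <= (s - v k) * m k by rewrite ler_pM2l; lra.
nra.
Qed.

End Polygon.

Section StickyParticles.
Context {R : realType} {n : nat} {gam : 'I_n.+1 -> R -> R}.
Hypothesis gam_pw : forall i, cont_pw_linear (gam i).

Let breaks_of := projT1 (choice gam_pw).

Definition breaks := flatten [seq breaks_of i | i <- enum 'I_n.+1].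

(* [tau 0 = 0] followed by the [ntau] positive breakpoints in increasing order;
   piece [p] is [[tau p, tau p.+1]], or [[tau ntau, +oo)] for [p = ntau]. *)
Definition times := sort <=%R (undup [seq c <- breaks | 0 < c]).
Definition ntau := size times.
Definition tau p := nth 0 (0 :: times) p.

Lemma sorted_times : sorted <%R times.
Proof. by rewrite /times sort_lt_sorted undup_uniq. Qed.

Lemma mem_times c : (c \in times) = (c \in breaks) && (0 < c).
Proof. by rewrite /times mem_sort mem_undup mem_filter andbC. Qed.

Lemma tau_ge0 p : 0 <= tau p.
Proof.
rewrite /tau; case: p => [|p] //=; case: (ltnP p ntau) => hp; last by rewrite nth_default.
by have := mem_nth 0 hp; rewrite mem_times => /andP[_ /ltW].
Qed.

Lemma tau_lt {p q} : (p < q)%N -> (q <= ntau)%N -> tau p < tau q.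
Proof.
case: q => [//|q] pq qN; rewrite /tau /=.
case: p pq => [|p] pq /=; first by have := mem_nth 0 qN; rewrite mem_times => /andP[].
apply: (sorted_ltn_nth lt_trans 0 sorted_times) => //; rewrite inE //.
by apply: leq_ltn_trans qN; exact: ltnW.
Qed.

Lemma tau_le {p q} : (p <= q)%N -> (q <= ntau)%N -> tau p <= tau q.
Proof. by rewrite leq_eqVlt => /orP[/eqP -> //|pq qN]; exact/ltW/tau_lt. Qed.

Lemma times_tau c : c \in times -> exists2 q, (0 < q <= ntau)%N & c = tau q.
Proof. by move=> hc; exists (index c times).+1; rewrite /= ?index_mem // /tau /= nth_index. Qed.

Lemma no_break_inside p c : (p < ntau)%N -> c \in breaks -> ~ (tau p < c < tau p.+1).
Proof.
move=> pN hc /andP[pc cp].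
have [q /andP[_ qN] ceq] : exists2 q, (0 < q <= ntau)%N & c = tau q.
  by apply: times_tau; rewrite mem_times hc (le_lt_trans (tau_ge0 p)).
rewrite ceq in pc cp; case: (leqP q p) => qp.
  by have := tau_le qp (ltnW pN); rewrite leNgt pc.
by have := tau_le qp qN; rewrite leNgt cp.
Qed.

Lemma no_break_after c : c \in breaks -> ~ (tau ntau < c).
Proof.
move=> hc Nc.
have [q /andP[_ qN] ceq] : exists2 q, (0 < q <= ntau)%N & c = tau q.
  by apply: times_tau; rewrite mem_times hc (le_lt_trans (tau_ge0 ntau)).
by have := tau_le qN (leqnn ntau); rewrite leNgt -ceq Nc.
Qed.

Lemma gam_affine i {a b} : 0 <= a -> a < b -> (forall c, c \in breaks -> ~ (a < c < b)) ->
  forall t u, a <= t <= b -> a < u <= b ->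
  gam i t = gam i a + (gam i u - gam i a) / (u - a) * (t - a).
Proof.
move=> a0 ab hc.
have [c0 [c1 gE]] : exists c0 c1 : R, forall t, a <= t <= b -> gam i t = c0 + c1 * t.
  apply: (projT2 (choice gam_pw) i a b) => // c ci; apply: hc.
  by apply/flatten_mapP; exists i; rewrite ?mem_enum.
move=> t u ht /andP[au ub].
rewrite (gE t ht) (gE a) ?lexx ?ltW // (gE u) ?(ltW au) //.
by field; rewrite subr_eq0 gt_eqF.
Qed.

Definition tau_next p := if (p < ntau)%N then tau p.+1 else tau p + 1.
Definition vel i p := (gam i (tau_next p) - gam i (tau p)) / (tau_next p - tau p).
Definition pos i p := gam i (tau p).
Definition vfin i := vel i ntau.

Lemma gam_piece i {p t} : (p <= ntau)%N -> tau p <= t -> ((p < ntau)%N -> t <= tau p.+1) ->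
  gam i t = pos i p + vel i p * (t - tau p).
Proof.
move=> pN pt tp; rewrite /vel /tau_next /pos; case: ifP => pN'.
  have hlt := tau_lt (ltnSn p) pN'.
  apply: (gam_affine i (tau_ge0 p) hlt); first by move=> c; apply: no_break_inside.
    by rewrite pt tp.
  by rewrite hlt lexx.
have pE : p = ntau by apply/eqP; rewrite eqn_leq pN leqNgt pN'.
rewrite pE in pt *.
have t1 : tau ntau < t + 1 by lra.
apply: (gam_affine i (tau_ge0 ntau) t1).
- by move=> c hc /andP[+ _]; apply: no_break_after.
- by rewrite pt /=; lra.
- by apply/andP; split; lra.
Qed.

Lemma pos_succ i p : (p < ntau)%N -> pos i p.+1 = pos i p + vel i p * (tau p.+1 - tau p).
Proof.
move=> pN; rewrite {1}/pos (gam_piece i (ltnW pN)) //.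
exact/ltW/tau_lt.
Qed.

Lemma gam_final i t : tau ntau <= t -> gam i t = pos i ntau + vfin i * (t - tau ntau).
Proof. by move=> Nt; apply: gam_piece => //; rewrite ltnn. Qed.

Lemma right_deriv_piece i p t : (p <= ntau)%N -> tau p <= t ->
  ((p < ntau)%N -> t < tau p.+1) -> right_deriv (gam i) t (vel i p).
Proof.
move=> pN pt tp.
pose d := if (p < ntau)%N then tau p.+1 - t else 1.
have d0 : 0 < d by rewrite /d; case: ifP => // h; have := tp h; lra.
apply: (right_deriv_affine d0) => s /andP[ts sd].
have tp' : (p < ntau)%N -> t <= tau p.+1 by move=> h; exact/ltW/tp.
rewrite (gam_piece i pN pt tp') (gam_piece i (t := s) pN); [ring | lra |].
by move=> h; move: sd; rewrite /d h; lra.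
Qed.

Lemma left_deriv_piece i p : (p < ntau)%N -> left_deriv (gam i) (tau p.+1) (vel i p).
Proof.
move=> pN; have hlt := tau_lt (ltnSn p) pN.
have d0 : 0 < tau p.+1 - tau p by lra.
apply: (left_deriv_affine d0) => s /andP[ps sp].
rewrite (gam_piece i (t := s) (ltnW pN)) ?(gam_piece i (t := tau p.+1) (ltnW pN)); first ring.
all: by lra.
Qed.

Context {m x v : 'I_n.+1 -> R}.
Hypothesis gam_init : forall i, gam i 0 = x i /\ right_deriv (gam i) 0 (v i).
Hypothesis gam_stick : forall i j s, 0 <= s -> gam i s = gam j s ->
  forall t, s <= t -> gam i t = gam j t.
Hypothesis gam_momentum : forall {t}, 0 < t -> forall i q, gam q t = gam i t ->
  forall (vl : 'I_n.+1 -> R) (vr : R),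
    (forall k, gam k t = gam i t -> left_deriv (gam k) t (vl k)) ->
    right_deriv (gam q) t vr ->
    vr = (\sum_(k | gam k t == gam i t) m k * vl k) / (\sum_(k | gam k t == gam i t) m k).
Hypothesis x_incr : forall i j : 'I_n.+1, (i < j)%N -> x i < x j.

Arguments gam_stick {i j s}.

Lemma pos0 i : pos i 0 = x i.
Proof. by case: (gam_init i). Qed.

Lemma vel0 i : vel i 0 = v i.
Proof.
apply: (cvg_unique (@Rhausdorff R) _ (proj2 (gam_init i))).
apply: right_deriv_piece => // N0.
by have := tau_lt (ltnSn 0) N0.
Qed.

Lemma vel_momentum p q : (p < ntau)%N ->
  vel q p.+1 = (\sum_(k | pos k p.+1 == pos q p.+1) m k * vel k p) /
               (\sum_(k | pos k p.+1 == pos q p.+1) m k).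
Proof.
move=> pN; have t0 : 0 < tau p.+1 by apply: (le_lt_trans (tau_ge0 p)); apply: tau_lt.
apply: (gam_momentum t0 q q erefl (fun k => vel k p)) => [k _|].
  exact: left_deriv_piece.
by apply: right_deriv_piece => // pN1; apply: tau_lt.
Qed.

(* Two trajectories that are affine on a piece and ordered at its start stay
   ordered on it: a crossing would make them meet, and then stick. *)
Lemma gam_le_piece {k k' p} : (p <= ntau)%N -> pos k p <= pos k' p ->
  forall t, tau p <= t -> ((p < ntau)%N -> t <= tau p.+1) -> gam k t <= gam k' t.
Proof.
move=> pN kk' t pt tp; rewrite leNgt; apply/negP => cross.
have [e /andP[e0 et] meet] : exists2 e, 0 <= e < t - tau p &
    (pos k' p - pos k p) + (vel k' p - vel k p) * e = 0.
  apply: affine_root; rewrite ?subr_ge0 //.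
  by move: cross; rewrite (gam_piece k pN pt tp) (gam_piece k' pN pt tp); lra.
have s0 : 0 <= tau p + e by have := tau_ge0 p; lra.
have tp' : (p < ntau)%N -> tau p + e <= tau p.+1 by move=> /tp; lra.
have ks : gam k (tau p + e) = gam k' (tau p + e).
  by rewrite !(gam_piece _ pN _ tp') ?lerDl //; lra.
by move: cross; rewrite (gam_stick s0 ks t) ?ltxx //; lra.
Qed.

Lemma pos_mono {k k' : 'I_n.+1} {p} : (k <= k')%N -> (p <= ntau)%N -> pos k p <= pos k' p.
Proof.
rewrite leq_eqVlt => /orP[/eqP/val_inj -> //|kk'].
elim: p => [|p IH] pN; first by rewrite !pos0 ltW ?x_incr.
apply: (gam_le_piece (ltnW pN) (IH (ltnW pN))) => //; first exact/ltW/tau_lt.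
Qed.

Lemma gam_mono_final {k k' : 'I_n.+1} {t} : (k <= k')%N -> tau ntau <= t -> gam k t <= gam k' t.
Proof.
move=> kk' Nt; apply: (gam_le_piece (leqnn ntau) (pos_mono kk' (leqnn ntau))) => //.
by rewrite ltnn.
Qed.

Lemma vfin_mono {k k' : 'I_n.+1} : (k <= k')%N -> vfin k <= vfin k'.
Proof.
move=> kk'; rewrite leNgt; apply/negP => vv.
have D0 : pos k ntau <= pos k' ntau by exact: pos_mono.
set T := (pos k' ntau - pos k ntau + 1) / (vfin k - vfin k').
have T0 : 0 <= T by apply: divr_ge0; lra.
have TE : T * (vfin k - vfin k') = pos k' ntau - pos k ntau + 1.
  by rewrite divfK // subr_eq0 gt_eqF.
have := gam_mono_final kk' (_ : tau ntau <= tau ntau + T).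
by rewrite !gam_final ?lerDl // addrAC subrr add0r; nra.
Qed.

Lemma pos_final_eq {k k' p} : (p <= ntau)%N -> pos k p = pos k' p -> pos k ntau = pos k' ntau.
Proof. by move=> pN e; apply: (gam_stick (tau_ge0 p) e); exact: tau_le. Qed.

Lemma vfin_eq {k k'} : pos k ntau = pos k' ntau -> vfin k = vfin k'.
Proof.
move=> e; have := gam_stick (tau_ge0 ntau) e (tau ntau + 1).
by rewrite !gam_final ?e; lra.
Qed.

Lemma vel_collision {p} {a b : 'I_n.+1} : (p < ntau)%N -> (a < b)%N ->
  pos a p.+1 = pos b p.+1 -> vel b p <= vel a p /\ (pos a p != pos b p -> vel b p < vel a p).
Proof.
move=> pN ab; rewrite !pos_succ // => meet.
have ap : pos a p <= pos b p by exact: pos_mono (ltnW ab) (ltnW pN).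
have dt : 0 < tau p.+1 - tau p by have := tau_lt (ltnSn p) pN; lra.
have E : (vel a p - vel b p) * (tau p.+1 - tau p) = pos b p - pos a p by lra.
split; first by rewrite -subr_ge0 -(pmulr_lge0 _ dt) E subr_ge0.
by move=> ne; rewrite -subr_gt0 -(pmulr_lgt0 _ dt) E subr_gt0 lt_neqAle ne.
Qed.

Hypothesis m_gt0 : forall i, 0 < m i.

Definition left_momentum c p := \sum_i left_ind c i * (m i * vel i p).

Section Collision.
Context {p : nat}.
Hypothesis pN : (p < ntau)%N.

Definition group_mass l := \sum_(k | pos k p.+1 == pos l p.+1) m k.

(* At [tau p.+1] particle [l] receives [share l k * (vel k p - vel l p)] of
   momentum from each particle [k]. *)
Definition share l k := if pos k p.+1 == pos l p.+1 then m l * m k / group_mass l else 0.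

Lemma group_mass_gt0 l : 0 < group_mass l.
Proof.
rewrite /group_mass (bigD1 l) //=; apply: ltr_pwDl (m_gt0 l) _.
by apply: sumr_ge0 => i _; exact/ltW.
Qed.

Lemma share_sym l k : share l k = share k l.
Proof.
rewrite /share eq_sym; case: eqP => // lk.
have -> : group_mass l = group_mass k by apply: eq_bigl => j; rewrite lk.
by rewrite [m l * _]mulrC.
Qed.

Lemma share_ge0 l k : 0 <= share l k.
Proof.
rewrite /share; case: ifP => // _.
by rewrite divr_ge0 ?mulr_ge0 ?ltW ?group_mass_gt0.
Qed.

Lemma sum_share l : \sum_k share l k = m l.
Proof.
rewrite /share -big_mkcond /= -mulr_suml -mulr_sumr -/(group_mass l).
by rewrite mulfK // gt_eqF ?group_mass_gt0.
Qed.

Lemma share_momentum l : m l * vel l p.+1 = \sum_k share l k * vel k p.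
Proof.
rewrite vel_momentum // -/(group_mass l) mulrCA mulr_suml big_mkcond /=.
by apply: eq_bigr => k _; rewrite /share; case: ifP => _; [ring | rewrite !mul0r].
Qed.

Lemma left_momentum_jump c : 2 * (left_momentum c p.+1 - left_momentum c p) =
  \sum_l \sum_k share l k * (left_ind c l - left_ind c k) * (vel k p - vel l p).
Proof.
rewrite -sumr_symmetrize; last exact: share_sym.
congr (2 * _); rewrite /left_momentum -sumrB; apply: eq_bigr => l _.
rewrite share_momentum -sum_share mulr_suml !mulr_sumr -sumrB.
by apply: eq_bigr => k _; ring.
Qed.

(* In a colliding pair the left particle was the faster one. *)
Lemma share_term_le0 c l k :
  share l k * (left_ind c l - left_ind c k) * (vel k p - vel l p) <= 0.
Proof.
have W0 := share_ge0 l k; rewrite /share in W0 *; case: ifP W0 => [/eqP meet|_] W0;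
  last by rewrite !mul0r.
rewrite /left_ind; case: (ltnP l c) => lc; case: (ltnP k c) => kc;
  rewrite ?subrr ?mulr0 ?mul0r //.
- have [vlk _] := vel_collision pN (leq_trans lc kc) (esym meet).
  by rewrite subr0 mulr1 mulr_ge0_le0 // subr_le0.
- have [vkl _] := vel_collision pN (leq_trans kc lc) meet.
  by rewrite sub0r mulrN1 mulNr -mulrN mulr_ge0_le0 // oppr_le0 subr_ge0.
Qed.

Lemma left_momentum_nonincr c : left_momentum c p.+1 <= left_momentum c p.
Proof.
suff : 2 * (left_momentum c p.+1 - left_momentum c p) <= 0 by lra.
rewrite left_momentum_jump; apply: sumr_le0 => l _; apply: sumr_le0 => k _.
exact: share_term_le0.
Qed.

Lemma left_momentum_const c :
  (forall k l : 'I_n.+1, pos k p.+1 = pos l p.+1 -> (k < c)%N = (l < c)%N) ->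
  left_momentum c p.+1 = left_momentum c p.
Proof.
move=> sep; suff : 2 * (left_momentum c p.+1 - left_momentum c p) = 0 by lra.
rewrite left_momentum_jump; apply: big1 => l _; apply: big1 => k _.
rewrite /share; case: ifP => [/eqP meet|_]; last by rewrite !mul0r.
by rewrite /left_ind (sep l k (esym meet)) subrr mulr0 mul0r.
Qed.

Lemma left_momentum_decr {c} {a b : 'I_n.+1} : (a < c)%N -> (c <= b)%N ->
  pos a p.+1 = pos b p.+1 -> pos a p != pos b p ->
  left_momentum c p.+1 < left_momentum c p.
Proof.
move=> ac cb meet ne; have ab : (a < b)%N := leq_trans ac cb.
suff : 2 * (left_momentum c p.+1 - left_momentum c p) < 0 by lra.
rewrite left_momentum_jump; apply: (sumr_lt0_at a).
  by move=> l; apply: sumr_le0 => k _; exact: share_term_le0.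
apply: (sumr_lt0_at b); first by move=> k; exact: share_term_le0.
have [_ /(_ ne) vba] := vel_collision pN ab meet.
have W0 : 0 < m a * m b / group_mass a by rewrite divr_gt0 ?mulr_gt0 ?group_mass_gt0.
rewrite /share meet eqxx /left_ind ac ltnNge cb subr0 mulr1 pmulr_rlt0 //; lra.
Qed.

End Collision.

Lemma left_momentum_le c p q : (p <= q <= ntau)%N -> left_momentum c q <= left_momentum c p.
Proof.
elim: q => [|q IH] /andP[pq qN]; first by case: p pq.
case: (ltngtP p q.+1) pq => // [pq _|-> //].
by apply: le_trans (left_momentum_nonincr qN c) (IH _); rewrite -ltnS pq (ltnW qN).
Qed.

Definition final_momentum c := Msum (fun i => m i * vfin i) c.
Definition mom_loss c := Qsum m v c - final_momentum c.

Lemma mom_lossE c : mom_loss c = left_momentum c 0 - left_momentum c ntau.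
Proof.
rewrite /mom_loss /final_momentum /left_momentum Qsum_ind Msum_ind; congr (_ - _).
by apply: eq_bigr => i _; rewrite vel0.
Qed.

Lemma mom_loss_ge0 c : 0 <= mom_loss c.
Proof. by rewrite mom_lossE subr_ge0 left_momentum_le // leqnn. Qed.

(* The [c] leftmost particles (indices [< c]) form a union of final clusters;
   these [c] are the paper's [k_j]. *)
Definition cluster_cut c := [forall i : 'I_n.+1, forall j : 'I_n.+1,
  (i < c <= j)%N ==> (pos i ntau != pos j ntau)].

Lemma cluster_cutP c : reflect
  (forall i j : 'I_n.+1, (i < c <= j)%N -> pos i ntau != pos j ntau) (cluster_cut c).
Proof.
apply: (iffP forallP) => [cut i j | cut i]; last by apply/forallP => j; apply/implyP/cut.
by move/forallP/(_ j)/implyP: (cut i).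
Qed.

Lemma cluster_cut0 : cluster_cut 0.
Proof. by apply/cluster_cutP. Qed.

Lemma cluster_cut_last : cluster_cut n.+1.
Proof. by apply/cluster_cutP => i j /andP[_]; rewrite leqNgt ltn_ord. Qed.

Lemma not_cluster_cut {c} : ~~ cluster_cut c ->
  exists i j : 'I_n.+1, (i < c <= j)%N /\ pos i ntau = pos j ntau.
Proof.
move/cluster_cutP => nocut; apply: contrapT => none; apply: nocut => i j ij.
by apply/eqP => e; apply: none; exists i, j.
Qed.

Lemma pos_squeeze {p} {i a b j : 'I_n.+1} : (p <= ntau)%N ->
  (i <= a)%N -> (a <= b)%N -> (b <= j)%N -> pos i p = pos j p -> pos a p = pos b p.
Proof.
move=> pN ia ab bj e; apply/le_anti; rewrite pos_mono //=.
by rewrite (le_trans (pos_mono bj pN)) // -e pos_mono.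
Qed.

Lemma cluster_cut_sep c q (k l : 'I_n.+1) : cluster_cut c -> (q <= ntau)%N ->
  pos k q = pos l q -> (k < c)%N = (l < c)%N.
Proof.
move=> /cluster_cutP cut qN; wlog kl : k l / (k <= l)%N => [sym|] e.
  by case: (leqP k l) => [|/ltnW] lk; [exact: sym | apply/esym/sym].
case: (ltnP l c) => lc; first by rewrite (leq_ltn_trans kl lc).
apply/negbTE/negP => kc; have := cut k l; rewrite kc lc => /(_ isT) /eqP; apply.
exact: pos_final_eq qN e.
Qed.

Lemma first_merge {a b : 'I_n.+1} {q} : (a < b)%N -> (q <= ntau)%N -> pos a q = pos b q ->
  exists2 p, (p < q)%N & pos a p != pos b p /\ pos a p.+1 = pos b p.+1.
Proof.
move=> ab; elim: q => [|q IH] qN e; first by move: e; rewrite !pos0 => /eqP; rewrite lt_eqF ?x_incr.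
case: (eqVneq (pos a q) (pos b q)) => [e'|ne]; last by exists q.
by have [p pq meet] := IH (ltnW qN) e'; exists p => //; exact: ltnW.
Qed.

Lemma mom_loss_cut {c} : cluster_cut c -> mom_loss c = 0.
Proof.
move=> cut; suff const : forall q, (q <= ntau)%N -> left_momentum c q = left_momentum c 0.
  by rewrite mom_lossE const ?subrr.
elim=> [//|q IH] qN; rewrite -IH ?(ltnW qN) //.
by apply: left_momentum_const => // k l; exact: cluster_cut_sep.
Qed.

Lemma mom_loss_gt0 {c} : ~~ cluster_cut c -> 0 < mom_loss c.
Proof.
move=> /not_cluster_cut[i [j [/andP[ic cj] e]]].
have [p pN [ne meet]] := first_merge (leq_trans ic cj) (leqnn ntau) e.
have := left_momentum_decr pN ic cj meet ne.
have : left_momentum c ntau <= left_momentum c p.+1.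
  by apply: left_momentum_le; rewrite pN leqnn.
have : left_momentum c p <= left_momentum c 0 by apply: left_momentum_le; rewrite (ltnW pN).
by rewrite mom_lossE; lra.
Qed.

Lemma pos_final_eq_no_cut {i j : 'I_n.+1} : (i <= j)%N ->
  pos i ntau = pos j ntau <-> (forall c, (i < c <= j)%N -> ~~ cluster_cut c).
Proof.
move=> ij; split=> [e c icj|nocut].
  by apply/cluster_cutP => /(_ i j icj); rewrite e eqxx.
have := nat_steps_eq (fun k => pos (inord k) ntau) ij; rewrite /= !inord_val; apply=> c icj.
have [k [l [/andP[kc cl] e]]] := not_cluster_cut (nocut c icj).
have /andP[ic cj] := icj; have c0 : (0 < c)%N := leq_ltn_trans (leq0n i) ic.
have cn : (c < n.+1)%N := leq_ltn_trans cj (ltn_ord j).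
have vc1 : nat_of_ord (inord c.-1 : 'I_n.+1) = c.-1.
  by rewrite inordK // (leq_ltn_trans (leq_pred c)).
have vc : nat_of_ord (inord c : 'I_n.+1) = c by rewrite inordK.
apply: (pos_squeeze (leqnn ntau) _ _ _ e); rewrite ?vc1 ?vc ?leq_pred //.
by rewrite -ltnS prednK.
Qed.

Lemma vfin_block {a b} : (a < b)%N -> (b <= n.+1)%N ->
  (forall c, (a < c < b)%N -> ~~ cluster_cut c) ->
  forall i : 'I_n.+1, (a <= i < b)%N -> vfin i = vfin (inord a).
Proof.
move=> ab bn nocut i /andP[ai ib].
have va : nat_of_ord (inord a : 'I_n.+1) = a by rewrite inordK // (leq_trans ab bn).
have ai' : ((inord a : 'I_n.+1) <= i)%N by rewrite va.
apply: esym; apply: vfin_eq; apply: (proj2 (pos_final_eq_no_cut ai')) => c /andP[ac ci].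
by apply: nocut; rewrite -{1}va ac (leq_ltn_trans ci ib).
Qed.

Context {f : R -> R}.
Hypothesis f_poly : forall (k : 'I_n.+1) (y : R), Msum m k <= y <= Msum m k.+1 ->
  f y = Qsum m v k + v k * (y - Msum m k).

(* All final velocities agree between consecutive cuts. *)
Lemma block_line {a b} : (a < b)%N -> (b <= n.+1)%N -> cluster_cut a ->
  (forall c, (a < c < b)%N -> ~~ cluster_cut c) ->
  forall c, (a <= c <= b)%N ->
  final_momentum c = Qsum m v a + vfin (inord a) * (Msum m c - Msum m a).
Proof.
move=> ab bn cuta nocut c /andP[ac cb].
have fa : final_momentum a = Qsum m v a by have := mom_loss_cut cuta; rewrite /mom_loss; lra.
have blk : forall i : 'I_n.+1, (a <= i < c)%N -> vfin i = vfin (inord a).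
  by move=> i /andP[ai ic]; rewrite (vfin_block ab bn nocut) // ai (leq_trans ic cb).
have := Msum_const (m := m) vfin _ ac blk.
by rewrite -/(final_momentum c) -/(final_momentum a); lra.
Qed.

Lemma support_line {c} : (c <= n.+1)%N -> cluster_cut c -> forall k, (k <= n.+1)%N ->
  Qsum m v c + vfin (inord c.-1) * (Msum m k - Msum m c) <= Qsum m v k.
Proof.
move=> cn cut k kn; set s := vfin (inord c.-1).
have vc : nat_of_ord (inord c.-1 : 'I_n.+1) = c.-1 by rewrite inordK //; case: (c) cn.
have E : Qsum m v k - Qsum m v c - s * (Msum m k - Msum m c) =
    mom_loss k - mom_loss c + \sum_i (left_ind k i - left_ind c i) * (m i * (vfin i - s)).
  rewrite /mom_loss /final_momentum !Qsum_ind !Msum_ind -!sumrB mulr_sumr -sumrB -big_split /=.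
  by apply: eq_bigr => i _; ring.
have S : 0 <= \sum_i (left_ind k i - left_ind c i) * (m i * (vfin i - s)).
  apply: sumr_ge0 => i _; rewrite /left_ind.
  case: (ltnP i k) => ik; case: (ltnP i c) => ic /=; rewrite ?subrr ?mul0r //.
  - rewrite subr0 mul1r; apply: mulr_ge0; first exact/ltW.
    by rewrite subr_ge0 vfin_mono // vc (leq_trans (leq_pred c) ic).
  - rewrite sub0r mulN1r oppr_ge0; apply: mulr_ge0_le0; first exact/ltW.
    by rewrite subr_le0 vfin_mono // vc -ltnS; case: (c) ic.
by have := mom_loss_cut cut; have := mom_loss_ge0 k; lra.
Qed.

Lemma support_minorant {c} : (c <= n.+1)%N -> cluster_cut c ->
  convex_minorant 0 (Msum m n.+1) f (fun y => Qsum m v c + vfin (inord c.-1) * (y - Msum m c)).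
Proof.
move=> cn cut; split; first exact: convex_on_affine.
exact: (polygon_above_line m_gt0 f_poly) (support_line cn cut).
Qed.

Lemma conv_env_cut c : (c <= n.+1)%N -> cluster_cut c ->
  conv_env 0 (Msum m n.+1) f (Msum m c) = Qsum m v c.
Proof.
move=> cn cut; rewrite -(polygon_vertex m_gt0 f_poly cn).
apply: (conv_env_touch (Msum_range m_gt0 cn) (support_minorant cn cut)).
by rewrite (polygon_vertex m_gt0 f_poly cn) subrr mulr0 addr0.
Qed.

Local Notation cmark j := (mark cluster_cut n.+1 j).
Local Notation ncblocks := (nblocks cluster_cut n.+1).

(* Off the cuts [P_c] lies strictly above the chord between the neighbouring cuts,
   by exactly the positive momentum loss. *)
Lemma conv_env_not_cut c : (c <= n.+1)%N -> ~~ cluster_cut c ->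
  conv_env 0 (Msum m n.+1) f (Msum m c) < Qsum m v c.
Proof.
move=> cn nocut; have cN : (c < n.+1)%N.
  by rewrite ltn_neqAle cn andbT; apply: contraNneq nocut => ->; exact: cluster_cut_last.
have [j hj /andP[ac cb]] := mark_cover _ _ cluster_cut0 cluster_cut_last _ cN.
have [ab bn cuta cutb between] := mark_block _ _ cluster_cut0 _ hj.
move: ac ab cb cuta cutb between; set a := cmark j.-1; set b := cmark j.
move=> ac ab cb cuta cutb between.
have {}ac : (a < c)%N by rewrite ltn_neqAle ac andbT; apply: contraNneq nocut => <-.
have line := block_line ab bn cuta between.
have Mac : Msum m a < Msum m c by apply: Msum_lt => //; exact: ltn_trans ac cN.
have Mcb : Msum m c < Msum m b by apply: Msum_lt.
set l := (Msum m b - Msum m c) / (Msum m b - Msum m a).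
have l01 : 0 <= l <= 1 by rewrite divr_ge0 ?ler_pdivrMr /=; lra.
have Mc : l * Msum m a + (1 - l) * Msum m b = Msum m c by rewrite /l; field; lra.
have := conv_env_le_chord (support_minorant (leq0n _) cluster_cut0)
  (Msum_range m_gt0 (ltnW (leq_trans ab bn))) (Msum_range m_gt0 bn) l01.
rewrite Mc !(polygon_vertex m_gt0 f_poly) ?(ltnW (leq_trans ab bn)) //.
suff -> : l * Qsum m v a + (1 - l) * Qsum m v b = final_momentum c.
  by have := mom_loss_gt0 nocut; rewrite /mom_loss; lra.
have qb : Qsum m v b = final_momentum b by have := mom_loss_cut cutb; rewrite /mom_loss; lra.
rewrite qb line ?(ltnW ab) ?leqnn // line ?(ltnW ac) ?(ltnW cb) // -Mc; ring.
Qed.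

Lemma envelope_contacts :
  [seq k <- iota 0 n.+2 | conv_env 0 (Msum m n.+1) f (Msum m k) == Qsum m v k] =
  marks cluster_cut n.+1.
Proof.
apply: eq_in_filter => k; rewrite mem_iota add0n ltnS => /andP[_ kn].
case: (boolP (cluster_cut k)) => cut; first by rewrite conv_env_cut ?eqxx.
by rewrite lt_eqF ?conv_env_not_cut.
Qed.

Lemma same_cluster_of_pos (i j : 'I_n.+1) : pos i ntau = pos j ntau -> same_cluster gam i j.
Proof.
move=> e; apply: (cvg_trans _ (cvg_cst (0 : R))).
apply: near_eq_cvg.
have late : \forall t \near +oo, tau ntau <= t by apply: nbhs_pinfty_ge; exact: num_real.
near=> t.
have Nt : tau ntau <= t by near: t.
by rewrite (gam_stick (tau_ge0 ntau) e t Nt) subrr normr0.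
Unshelve. all: try by end_near.
exact: proper_pinfty_nbhs.
Qed.

(* A gap between the final positions of ordered particles can only widen. *)
Lemma pos_of_same_cluster_le (i j : 'I_n.+1) : (i <= j)%N -> same_cluster gam i j ->
  pos i ntau = pos j ntau.
Proof.
move=> ij cl; apply/le_anti; rewrite pos_mono //= leNgt; apply/negP => gap.
have gap0 : 0 < pos j ntau - pos i ntau by rewrite subr_gt0.
have close : \forall t \near +oo, `| 0 - `| gam i t - gam j t | | < pos j ntau - pos i ntau.
  exact: cvgr_dist_lt cl _ gap0.
have [t Nt] := pinfty_ex_ge (num_real (tau ntau)) close.
rewrite sub0r normrN normr_id distrC ger0_norm ?subr_ge0 ?gam_mono_final // !gam_final //.
have tN : 0 <= t - tau ntau by lra.
by have := vfin_mono ij; nra.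
Qed.

Lemma same_cluster_pos (i j : 'I_n.+1) : same_cluster gam i j <-> pos i ntau = pos j ntau.
Proof.
split; last exact: same_cluster_of_pos.
case: (leqP i j) => [ij|/ltnW ji]; first exact: pos_of_same_cluster_le.
by move/same_cluster_sym/(pos_of_same_cluster_le _ _ ji)/esym.
Qed.

Lemma no_cut_iff_block {i j : 'I_n.+1} : (i <= j)%N ->
  (forall c, (i < c <= j)%N -> ~~ cluster_cut c) <->
  exists j0, [/\ (0 < j0 <= ncblocks)%N,
    (cmark j0.-1 <= i < cmark j0)%N & (cmark j0.-1 <= j < cmark j0)%N].
Proof.
move=> ij; split=> [nocut|[j0 [hj0 /andP[ai ib] /andP[aj jb]]] c /andP[ic cj]].
  have [j0 hj0 /andP[ai ib]] := mark_cover _ _ cluster_cut0 cluster_cut_last _ (ltn_ord i).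
  have [_ _ _ cutb _] := mark_block _ _ cluster_cut0 _ hj0.
  exists j0; split; rewrite ?ai ?ib ?(leq_trans ai ij) //= ltnNge.
  by apply: contraL cutb => bj; apply: nocut; rewrite ib.
have [_ _ _ _ between] := mark_block _ _ cluster_cut0 _ hj0.
by apply: between; rewrite (leq_ltn_trans ai ic) (leq_ltn_trans cj jb).
Qed.

Lemma same_cluster_block (i j : 'I_n.+1) : same_cluster gam i j <->
  exists j0, [/\ (0 < j0 <= ncblocks)%N,
    (cmark j0.-1 <= i < cmark j0)%N & (cmark j0.-1 <= j < cmark j0)%N].
Proof.
rewrite same_cluster_pos; case: (leqP i j) => [ij|/ltnW ji].
  exact: iff_trans (pos_final_eq_no_cut ij) (no_cut_iff_block ij).
have blk := iff_trans (pos_final_eq_no_cut ji) (no_cut_iff_block ji).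
split=> [/esym/blk [j0 [? ? ?]]|[j0 [? ? ?]]]; first by exists j0.
by apply/esym/blk; exists j0.
Qed.

Lemma block_velocity j0 (i : 'I_n.+1) : (0 < j0 <= ncblocks)%N ->
  (cmark j0.-1 <= i < cmark j0)%N ->
  exists T0 : R, forall t, T0 <= t -> right_deriv (gam i) t
    ((Qsum m v (cmark j0) - Qsum m v (cmark j0.-1)) /
     (Msum m (cmark j0) - Msum m (cmark j0.-1))).
Proof.
move=> hj0 ai_b; have [ab bn cuta cutb between] := mark_block _ _ cluster_cut0 _ hj0.
move: ab bn cuta cutb between ai_b; set a := cmark j0.-1; set b := cmark j0.
move=> ab bn cuta cutb between ai_b.
have qb : Qsum m v b = final_momentum b by have := mom_loss_cut cutb; rewrite /mom_loss; lra.
have Mab : Msum m a < Msum m b by apply: Msum_lt; rewrite // (leq_trans ab bn).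
suff -> : (Qsum m v b - Qsum m v a) / (Msum m b - Msum m a) = vfin i.
  by exists (tau ntau) => t Nt; apply: right_deriv_piece; rewrite ?ltnn.
rewrite qb (block_line ab bn cuta between) ?(ltnW ab) ?leqnn // addrAC subrr add0r.
by rewrite mulfK ?subr_eq0 ?gt_eqF // (vfin_block ab bn between).
Qed.

End StickyParticles.

Theorem theorem2p1 (R : realType) (n : nat) (m x v : 'I_n -> R)
  (gam : 'I_n -> R -> R) (f : R -> R) :
  (0 < n)%N ->
  (forall i, 0 < m i) ->
  (forall i j : 'I_n, (i < j)%N -> x i < x j) ->
  sticky_trajectories m x v gam ->
  (* f: graph is the union of the segments [P_k, P_(k+1)] (0-based k) *)
  (forall (k : 'I_n) (y : R), Msum m k <= y <= Msum m k.+1 ->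
      f y = Qsum m v k + v k * (y - Msum m k)) ->
  let r := conv_env 0 (Msum m n) f in
  let K := [seq k <- iota 0 n.+1 | r (Msum m k) == Qsum m v k] in
  let l := (size K).-1 in
  let kk := fun j => nth 0%N K j in
  (* particle i (0-based) belongs to T_j iff k_(j-1) < i+1 <= k_j *)
  let inT := fun (i : 'I_n) j => (kk j.-1 <= i < kk j)%N in
  let slope := fun j => (Qsum m v (kk j) - Qsum m v (kk j.-1)) /
                        (Msum m (kk j) - Msum m (kk j.-1)) in
  [/\ kk 0%N = 0%N, kk l = n,
      (forall i j : 'I_n, same_cluster gam i j <->
          exists j0, [/\ (0 < j0 <= l)%N, inT i j0 & inT j j0]) &
      (forall j0, (0 < j0 <= l)%N -> forall i : 'I_n, inT i j0 ->
          exists T0 : R, forall t, T0 <= t -> right_deriv (gam i) t (slope j0))].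
Proof.
case: n => [//|n] in m x v gam f * => _ m_gt0 x_incr [gam_pw gam_init gam_stick gam_mom] f_poly.
move=> r K l kk inT slope; rewrite /inT /slope /kk /l.
have -> : K = marks (cluster_cut gam_pw) n.+1 by exact: envelope_contacts.
split.
- exact: mark0 (cluster_cut0 gam_pw).
- exact: mark_last (cluster_cut_last gam_pw).
- by move=> i j; exact: same_cluster_block.
- by move=> j0 hj0 i; exact: block_velocity.
Qed.
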